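(* Let $W'\subset S_n$ be a reflection subgroup and $u\in S_n$. Then the coset $W'u$ is diamond-closed in $S_n$.
   Context: $S_n$ is the symmetric group with length $\ell$ (w.r.t. simple reflections $s_i=(i\ i{+}1)$), and $T$ its set of transpositions. A reflection subgroup is a subgroup generated by a set of transpositions. The Bruhat graph $\Gamma$ has vertex set $S_n$ and edges $w\to tw$ whenever $t\in T$, $\ell(w)<\ell(tw)$. A diamond is a subgraph of $\Gamma$ with four distinct vertices $x_1,\dots,x_4$ and edges $x_1\to x_2\to x_4$, $x_1\to x_3\to x_4$. A set $X\subset S_n$ is diamond-closed in $S_n$ if whenever $X$ contains three vertices of a diamond it contains the fourth. *)

From mathcomp Require Import all_boot all_order all_fingroup.
Set Implicit Arguments. Unset Strict Implicit. Unset Printing Implicit Defensive.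
Local Open Scope group_scope.

(* Permutations of 'I_n act as functions; [comp a b] is the composite a∘b,
   i.e. (comp a b) x = a (b x).  (MathComp's product (b * a) applies b first.) *)
Definition comp n (a b : 'S_n) : 'S_n := b * a.

(* Coxeter length w.r.t. simple transpositions = number of inversions. *)
Definition perm_length n (w : 'S_n) : nat :=
  #|[set p : 'I_n * 'I_n | (p.1 < p.2)%N && (w p.2 < w p.1)%N]|.

Definition is_transposition n (t : 'S_n) : bool :=
  [exists i : 'I_n, exists j : 'I_n, (i != j) && (t == tperm i j)].

Definition reflection_subgroup n (W : {group 'S_n}) : Prop :=
  exists A : {set 'S_n}, (forall t, t \in A -> is_transposition t) /\ W :=: <<A>>.

Definition bruhat_edge n (w v : 'S_n) : bool :=
  [exists t : 'S_n, is_transposition t && (v == comp t w)]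
  && (perm_length w < perm_length v)%N.

Definition diamond n (x1 x2 x3 x4 : 'S_n) : bool :=
  uniq [:: x1; x2; x3; x4] &&
  [&& bruhat_edge x1 x2, bruhat_edge x2 x4, bruhat_edge x1 x3 & bruhat_edge x3 x4].

Definition diamond_closed n (X : {set 'S_n}) : Prop :=
  forall x1 x2 x3 x4 : 'S_n, diamond x1 x2 x3 x4 ->
    (3 <= count (fun x => x \in X) [:: x1; x2; x3; x4])%N ->
    all (fun x => x \in X) [:: x1; x2; x3; x4].

Definition right_coset n (W : {set 'S_n}) (u : 'S_n) : {set 'S_n} :=
  [set comp w u | w in W].

(* Edges of the Bruhat graph are right multiplications by transpositions, so a
   diamond x1 -> x2 -> x4, x1 -> x3 -> x4 is a square y0 - y1 - y2 - y3 - y0 of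
   transposition steps, with y3 any prescribed vertex.  If y0, y1, y2 lie in the
   coset, then t1 = y0^-1 y1 and t2 = y1^-1 y2 lie in W, t1 != t2 as y0 != y2,
   and t1 t2 = t t' with t = y0^-1 y3.  Such an exchange forces t into <t1, t2>:
   if t1 and t2 are disjoint, t is one of them; otherwise <t1, t2> is the full
   symmetric group on their three points.  Hence y3 = y0 t lies in the coset. *)

From mathcomp Require Import all_boot all_order all_fingroup.

Set Implicit Arguments. Unset Strict Implicit. Unset Printing Implicit Defensive.
Local Open Scope group_scope.

Section Transpositions.
Variable n : nat.
Implicit Types (a b p q r s : 'I_n) (t x y : 'S_n).

Lemma is_transpositionP t :
  reflect (exists p q, p != q /\ t = tperm p q) (is_transposition t).
Proof.
apply: (iffP existsP) => [[p /existsP[q /andP[npq /eqP->]]]|[p [q [npq ->]]]].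
  by exists p, q.
by exists p; apply/existsP; exists q; rewrite npq eqxx.
Qed.

Lemma transposition2 t : is_transposition t -> t * t = 1.
Proof. by case/is_transpositionP=> p [q [_ ->]]; rewrite tperm2. Qed.

Lemma invg_transposition t : is_transposition t -> t^-1 = t.
Proof. by move=> Tt; apply/eqP; rewrite eq_invg_mul transposition2. Qed.

Lemma tperm_movedE p q a : p != q -> (tperm p q a != a) = (a \in [:: p; q]).
Proof.
rewrite !inE => npq; case: tpermP => [->|->|/eqP-ap /eqP-aq].
- by rewrite eqxx eq_sym npq.
- by rewrite eqxx orbT npq.
- by rewrite eqxx (negbTE ap) (negbTE aq).
Qed.

Lemma tperm_of_moved t a b : is_transposition t -> a != b -> t b = a -> t = tperm a b.
Proof.
case/is_transpositionP=> c [d [_ ->]] nab; case: tpermP => [->|->|_ _ ba].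
- by move<-; rewrite tpermC.
- by move<-.
- by rewrite ba eqxx in nab.
Qed.

Lemma tperm_pairE p q a b :
  a \in [:: p; q] -> b \in [:: p; q] -> a != b -> tperm a b = tperm p q.
Proof.
by rewrite !inE => /orP[]/eqP-> /orP[]/eqP->; rewrite ?eqxx // tpermC.
Qed.

Lemma exchange_cross_share p q r s t' :
  is_transposition t' -> p != q -> r != s -> p != r ->
  tperm p q * tperm r s = tperm p r * t' -> [|| q == r, p == s | q == s].
Proof.
move=> T' npq nrs npr E; apply/negPn/negP; rewrite !negb_or => /and3P[nqr nps nqs].
have at_point z : tperm r s (tperm p q z) = t' (tperm p r z) by rewrite -!permM E.
have := at_point p; rewrite !tpermL tpermD 1?eq_sym // => /esym.
move=> /(tperm_of_moved T' nqr) t'E.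
have := at_point r; rewrite t'E tpermR (tpermD npr nqr) tpermL tpermD 1?eq_sym //.
by move=> sp; rewrite sp eqxx in nps.
Qed.

Lemma exchange_cross_mem_tperm p q r s t' :
  is_transposition t' -> p != q -> r != s -> p != r ->
  tperm p q * tperm r s = tperm p r * t' ->
  tperm p r \in <<[set tperm p q; tperm r s]>>.
Proof.
move=> T' npq nrs npr E.
have G1 : tperm p q \in <<[set tperm p q; tperm r s]>> by rewrite mem_gen ?set21.
have G2 : tperm r s \in <<[set tperm p q; tperm r s]>> by rewrite mem_gen ?set22.
case/or3P: (exchange_cross_share T' npq nrs npr E) => /eqP-e.
- by rewrite -{1}e.
- by rewrite {1}e tpermC.
- have nqr : q != r by rewrite e eq_sym.
  have -> : tperm p r = tperm r s ^ tperm p q.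
    by rewrite tpermJ (tpermD npr nqr) -e tpermR tpermC.
  exact: groupJ.
Qed.

Lemma exchange_cross_mem p q r s a b t' :
  is_transposition t' -> p != q -> r != s ->
  a \in [:: p; q] -> b \in [:: r; s] -> a != b ->
  tperm p q * tperm r s = tperm a b * t' ->
  tperm a b \in <<[set tperm p q; tperm r s]>>.
Proof.
move=> T' npq nrs; have nqp : q != p by rewrite eq_sym.
have nsr : s != r by rewrite eq_sym.
rewrite !inE => /orP[]/eqP-> /orP[]/eqP-> nab E.
- exact: (exchange_cross_mem_tperm T' npq nrs nab E).
- rewrite [tperm r s]tpermC in E *; exact: (exchange_cross_mem_tperm T' npq nsr nab E).
- rewrite [tperm p q]tpermC in E *; exact: (exchange_cross_mem_tperm T' nqp nrs nab E).
- rewrite [tperm p q]tpermC [tperm r s]tpermC in E *.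
  exact: (exchange_cross_mem_tperm T' nqp nsr nab E).
Qed.

Section Exchange.
Variables t1 t2 t' : 'S_n.
Hypotheses (T1 : is_transposition t1) (T2 : is_transposition t2).
Hypotheses (T' : is_transposition t') (t1_neq_t2 : t1 != t2).

(* Otherwise t' b = a, so t' = tperm a b and t1 * t2 = 1. *)
Lemma exchange_moved a b :
  a != b -> t1 * t2 = tperm a b * t' -> (t1 a != a) || (t2 a != a).
Proof.
move=> nab E; apply/negPn/negP; rewrite negb_or !negbK => /andP[/eqP-t1a /eqP-t2a].
have := congr1 (fun g : 'S_n => g a) E; rewrite !permM t1a t2a tpermL => /esym.
move=> /(tperm_of_moved T' nab) t'E.
move: E; rewrite t'E tperm2 => /eqP.
by rewrite -eq_invg_mul invg_transposition // (negbTE t1_neq_t2).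
Qed.

Lemma exchange_mem t : is_transposition t ->
  t1 * t2 = t * t' -> t \in <<[set t1; t2]>>.
Proof.
move=> /is_transpositionP[a [b [nab ->]]] E.
have nba : b != a by rewrite eq_sym.
have a_moved := exchange_moved nab E.
have b_moved : (t1 b != b) || (t2 b != b).
  by apply: (exchange_moved nba); rewrite tpermC.
case/is_transpositionP: T1 t1_neq_t2 E a_moved b_moved => p [q [npq ->]].
case/is_transpositionP: T2 => r [s [nrs ->]] _ E.
rewrite !tperm_movedE // => /orP[] a_in /orP[] b_in.
- by rewrite (tperm_pairE a_in b_in nab) mem_gen ?set21.
- exact: (exchange_cross_mem T' npq nrs a_in b_in nab E).
- rewrite [tperm a b]tpermC in E *.
  exact: (exchange_cross_mem T' npq nrs b_in a_in nba E).
- by rewrite (tperm_pairE a_in b_in nab) mem_gen ?set22.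
Qed.

End Exchange.

Definition transposition_adjacent (x y : 'S_n) : bool := is_transposition (x^-1 * y).

Lemma transposition_adjacent_sym x y :
  transposition_adjacent x y -> transposition_adjacent y x.
Proof.
by move=> T; rewrite /transposition_adjacent -[y^-1 * x]invgK invMg invgK invg_transposition.
Qed.

Lemma bruhat_edge_adjacent x y : bruhat_edge x y -> transposition_adjacent x y.
Proof. by case/andP=> /existsP[t /andP[T /eqP->]] _; rewrite /transposition_adjacent mulKg. Qed.

Lemma adjacent_square_mem (W : {group 'S_n}) y0 y1 y2 y3 :
  transposition_adjacent y0 y1 -> transposition_adjacent y1 y2 ->
  transposition_adjacent y0 y3 -> transposition_adjacent y3 y2 -> y0 != y2 ->
  y0^-1 * y1 \in W -> y1^-1 * y2 \in W -> y0^-1 * y3 \in W.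
Proof.
move=> A01 A12 A03 A32 n02 W01 W12.
have neq : y0^-1 * y1 != y1^-1 * y2.
  apply: contraNneq n02 => e; rewrite eq_mulVg1 -[y2](mulVKg y1) -e mulgA.
  by rewrite transposition2.
have E : (y0^-1 * y1) * (y1^-1 * y2) = (y0^-1 * y3) * (y3^-1 * y2).
  by rewrite !mulgA !mulgK.
apply: subsetP (exchange_mem A01 A12 A32 neq A03 E).
by rewrite gen_subG subUset !sub1set W01 W12.
Qed.

Lemma lcoset_square_closed (W : {group 'S_n}) u y0 y1 y2 y3 :
  transposition_adjacent y0 y1 -> transposition_adjacent y1 y2 ->
  transposition_adjacent y0 y3 -> transposition_adjacent y3 y2 -> y0 != y2 ->
  y0 \in u *: W -> y1 \in u *: W -> y2 \in u *: W -> y3 \in u *: W.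
Proof.
move=> A01 A12 A03 A32 n02 /lcoset_eqP<- Wy1 Wy2.
rewrite mem_lcoset; apply: (adjacent_square_mem A01 A12 A03 A32 n02); rewrite -mem_lcoset //.
by rewrite (lcoset_eqP Wy1).
Qed.

(* [comp w u] is [u * w], so the paper's right coset W'u is the left coset [u *: W]. *)
Lemma right_cosetE (W : {set 'S_n}) u : right_coset W u = u *: W.
Proof. by rewrite -lcosetE. Qed.

End Transpositions.

Theorem lemma4p3 (n : nat) (W : {group 'S_n}) (u : 'S_n) :
  reflection_subgroup W -> diamond_closed (right_coset W u).
Proof.
move=> _ x1 x2 x3 x4 /andP[uniq_x /and4P[]].
move=> /bruhat_edge_adjacent A12 /bruhat_edge_adjacent A24.
move=> /bruhat_edge_adjacent A13 /bruhat_edge_adjacent A34.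
move: uniq_x; rewrite /= !inE !negb_or => /and4P[/and3P[_ _ n14] /andP[n23 _] _ _].
have A21 := transposition_adjacent_sym A12; have A43 := transposition_adjacent_sym A34.
rewrite right_cosetE.
case X1: (x1 \in u *: W); case X2: (x2 \in u *: W);
  case X3: (x3 \in u *: W); case X4: (x4 \in u *: W) => //= _.
- by rewrite (lcoset_square_closed A21 A13 A24 A43 n23 X2 X1 X3) in X4.
- by rewrite (lcoset_square_closed A12 A24 A13 A34 n14 X1 X2 X4) in X3.
- by rewrite (lcoset_square_closed A13 A34 A12 A24 n14 X1 X3 X4) in X2.
- by rewrite (lcoset_square_closed A24 A43 A21 A13 n23 X2 X4 X3) in X1.
Qed.
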